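(* Let $\mathbf{t}$ be the Thue-Morse sequence. For every nonnegative integer $n$, $\mathbf{t}$ has an unbordered factor of length $n$ if and only if the base-$2$ representation of $n$ (written starting with the most significant digit, without leading zeroes) is not of the form $1(01^*0)^*10^*1$, i.e., does not belong to the regular language denoted by this regular expression.
   Context: The Thue-Morse sequence is $\mathbf{t} = t(0)t(1)t(2)\cdots = 0110100110010110\cdots$, where $t(n)$ is the sum modulo $2$ of the binary digits of $n$. For an infinite sequence $\mathbf{x}$, a factor of length $n$ is a word $\mathbf{x}[i..i+n-1] = \mathbf{x}[i]\mathbf{x}[i+1]\cdots\mathbf{x}[i+n-1]$ for some $i \geq 0$. A finite word $w$ is bordered if there is a word $x$ with $0 < |x| \leq |w|/2$ such that $w$ both begins and ends with $x$; otherwise $w$ is unbordered. In the regular expression, $^*$ denotes Kleene star and juxtaposition denotes concatenation. *)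

From mathcomp Require Import all_boot.
Set Implicit Arguments. Unset Strict Implicit. Unset Printing Implicit Defensive.

(* Binary digits of n, least significant first (fuel = n suffices). *)
Fixpoint bits_lsb (fuel n : nat) : seq bool :=
  match fuel with
  | 0 => [::]
  | f.+1 => if n is 0 then [::] else odd n :: bits_lsb f n./2
  end.

(* Base-2 representation of n, most significant digit first, no leading
   zeroes (so binary 0 = [::]). true = digit 1, false = digit 0. *)
Definition binary (n : nat) : seq bool := rev (bits_lsb n n).

Definition thue_morse (n : nat) : bool := odd (count id (binary n)).

Definition factor (x : nat -> bool) (i n : nat) : seq bool :=
  mkseq (fun j => x (i + j)) n.

Definition bordered (w : seq bool) : Prop :=
  exists u : seq bool, 0 < size u <= size w %/ 2 /\ prefix u w /\ suffix u w.

Definition unbordered (w : seq bool) : Prop := ~ bordered w.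

Inductive regex :=
  | REps
  | RSym of bool
  | RCat of regex & regex
  | RStar of regex.

Inductive matches : regex -> seq bool -> Prop :=
  | m_eps : matches REps [::]
  | m_sym b : matches (RSym b) [:: b]
  | m_cat r1 r2 s1 s2 : matches r1 s1 -> matches r2 s2 ->
      matches (RCat r1 r2) (s1 ++ s2)
  | m_star0 r : matches (RStar r) [::]
  | m_starS r s1 s2 : matches r s1 -> matches (RStar r) s2 ->
      matches (RStar r) (s1 ++ s2).

Notation "'d0'" := (RSym false).
Notation "'d1'" := (RSym true).

Definition re_thm4 : regex :=
  RCat d1 (RCat (RStar (RCat d0 (RCat (RStar d1) d0)))
                (RCat d1 (RCat (RStar d0) d1))).
Lemma sanity : [seq thue_morse i | i <- iota 0 16] =
  [:: false;true;true;false;true;false;false;true;true;false;false;true;false;true;true;false].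
Proof. by []. Qed.
Lemma sanity2 : binary 13 = [:: true; true; false; true]. Proof. by []. Qed.

From mathcomp Require Import all_boot zify.
Set Implicit Arguments. Unset Strict Implicit. Unset Printing Implicit Defensive.

(* A factor is bordered iff it has a period smaller than its length, and periods of
   Thue-Morse factors are rigid: an odd period overlaps the factor in at most three
   letters, and an even period 2e of t[2a+b, 2a+b+2m+r) is exactly a period e of
   t[a, a+m+(b||r)). So a finite profile of t[i, i+n) (its length capped at 4, its parity,
   its first and last three letters, and which periods d with d + k < n, k < 3, it has)
   obeys a recursion profile(2a+b, 2m+r) = F(b, r, profile(a, m), profile(a, m+1)).
   The set of all profiles of factors of length n (with n+1 and n+2) therefore evolves
   deterministically along the binary digits of n.  A breadth-first search computes the
   finitely many reachable sets, each paired with the state of a DFA for 1(01*0)*10*1,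
   and checks that a set contains the profile of an unbordered factor exactly when
   that DFA state is not accepting. *)

Local Notation t := thue_morse.

Lemma bits_lsb_fuel f g n : n <= f -> n <= g -> bits_lsb f n = bits_lsb g n.
Proof.
elim: f g n => [|f IH] [|g] [|n] //=; try lia.
by move=> le_nf le_ng; congr (_ :: _); apply: IH; lia.
Qed.

Lemma binary_half n : 0 < n -> binary n = rcons (binary n./2) (odd n).
Proof.
case: n => [//|n] _; rewrite /binary -rev_cons /=.
by rewrite (@bits_lsb_fuel n (uphalf n) (uphalf n)) //; lia.
Qed.

Lemma thue_morse_double_add x (c : bool) : t (2 * x + c) = c (+) t x.
Proof.
have [|pos] := posnP (2 * x + c); first by case: x c => [|x] [].
rewrite /thue_morse binary_half // -cats1 count_cat /= addn0 oddD addbC.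
have -> : (2 * x + c)./2 = x by case: c {pos}; lia.
have -> : odd (2 * x + c) = c by case: c {pos}; lia.
by rewrite oddb.
Qed.

Lemma eq_in_mkseq T (f g : nat -> T) n :
  (forall j, j < n -> f j = g j) -> mkseq f n = mkseq g n.
Proof. by move=> eq_fg; apply/eq_in_map => j; rewrite mem_iota => /andP [_ /eq_fg]. Qed.

Section Periods.

Variable x : nat -> bool.

Definition has_period i n d := forall j, j + d < n -> x (i + j) = x (i + j + d).

Lemma take_factor i n m : m <= n -> take m (factor x i n) = factor x i m.
Proof. by move=> le_mn; rewrite /factor /mkseq -map_take take_iota (minn_idPl _). Qed.

Lemma drop_factor i n d : drop d (factor x i n) = factor x (i + d) (n - d).
Proof.
rewrite /factor /mkseq -map_drop drop_iota add0n.
have -> : iota d (n - d) = [seq d + j | j <- iota 0 (n - d)] by rewrite -iotaDl addn0.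
by rewrite -map_comp; apply: eq_map => j /=; rewrite addnA.
Qed.

Lemma has_periodE i m d : has_period i (m + d) d <-> factor x i m = factor x (i + d) m.
Proof.
split => [per | eq_f j lt_j].
  apply: (@eq_from_nth _ false); rewrite !size_mkseq // => j lt_jm.
  by rewrite !nth_mkseq // per ?ltn_add2r // addnAC.
have lt_jm : j < m by rewrite -(ltn_add2r d).
by have := congr1 (nth false ^~ j) eq_f; rewrite !nth_mkseq // addnAC.
Qed.

Lemma has_period_mul i n d k : has_period i n d -> has_period i n (k * d).
Proof.
move=> per; elim: k => [|k IH] j lt_j; first by rewrite mul0n addn0.
rewrite IH; last by lia.
by rewrite -addnA per; [rewrite mulSn addnA (addnC d) addnA | lia].
Qed.

Lemma bordered_factorE i n :
  bordered (factor x i n) <-> exists2 m, 0 < m <= n./2 & factor x i m = factor x (i + (n - m)) m.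
Proof.
rewrite /bordered divn2; split => [[u [size_u [pre suf]]]|[m /andP [m_gt0 le_m] eq_f]].
  rewrite size_mkseq in size_u; exists (size u) => //.
  have le_un : size u <= n by case/andP: size_u; lia.
  move: pre suf; rewrite prefixE suffixE size_mkseq take_factor ?drop_factor //.
  move=> /eqP-> /eqP; have -> : n - (n - size u) = size u by lia.
  by move=> ->.
exists (factor x i m); rewrite !size_mkseq m_gt0 le_m prefixE suffixE !size_mkseq.
rewrite take_factor ?drop_factor; last by lia.
by rewrite eq_f; have -> : n - (n - m) = m by lia.
Qed.

Lemma bordered_factor_period i n :
  bordered (factor x i n) <-> exists2 d, 0 < d < n & has_period i n d.
Proof.
rewrite bordered_factorE; split => [[m size_m eq_f]|[d /andP [d_gt0 lt_dn] per]].
  exists (n - m); first by lia.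
  by move/has_periodE: eq_f; rewrite subnKC //; lia.
pose k := (n - 1) %/ d.
have le_kd : k * d <= n - 1 by rewrite leq_divM.
have lt_kd : n - 1 < k * d + d by rewrite -mulSnr ltn_ceil.
have le_dkd : d <= k * d by rewrite leq_pmull // divn_gt0 //; lia.
move: (has_period_mul (k := k) per) le_kd lt_kd le_dkd; set p := k * d => per_p *.
exists (n - p); first by lia.
have -> : n - (n - p) = p by lia.
by apply/has_periodE; rewrite subnK //; lia.
Qed.

Definition short_period k i n := exists2 d, 0 < d & d + k < n /\ has_period i n d.

Definition short_periodb k i n : bool :=
  has (fun d => [&& 0 < d, d + k < n &
                    all (fun j => (j + d < n) ==> (x (i + j) == x (i + j + d))) (iota 0 n)])
      (iota 0 n).

Lemma short_periodP k i n : reflect (short_period k i n) (short_periodb k i n).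
Proof.
apply: (iffP hasP) => [[d _ /and3P [d_gt0 lt_dk /allP per]]|[d d_gt0 [lt_dk per]]].
  exists d => //; split => // j lt_j.
  by apply/eqP/(implyP (per j _)) => //; rewrite mem_iota; lia.
exists d; first by rewrite mem_iota; lia.
by rewrite d_gt0 lt_dk; apply/allP => j _; apply/implyP => /per ->.
Qed.

End Periods.

Lemma thue_morse_even x : t (2 * x) = t x.
Proof. by rewrite -[2 * x]addn0 (thue_morse_double_add x false). Qed.

Lemma thue_morse_odd x : t (2 * x + 1) = ~~ t x.
Proof. exact: (thue_morse_double_add x true). Qed.

Lemma thue_morse_no_cube x : t x = t x.+1 -> t x.+1 = t x.+2 -> False.
Proof.
have [y [->|->]] : exists y, x = 2 * y \/ x = 2 * y + 1 by exists x./2; lia.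
  have -> : (2 * y).+1 = 2 * y + 1 by lia.
  by rewrite thue_morse_even thue_morse_odd; case: (t y).
have -> : (2 * y + 1).+1 = 2 * y.+1 by lia.
have -> : (2 * y.+1).+1 = 2 * y.+1 + 1 by lia.
by rewrite thue_morse_even !thue_morse_odd; case: (t y); case: (t y.+1).
Qed.

(* Words of length 4 at positions of different parity differ: equality would force
   t z = t (z + 1) = t (z + 2). *)
Lemma thue_morse_parity_shift y z : ~ (forall j, j < 4 -> t (2 * y + j) = t (2 * z + 1 + j)).
Proof.
move=> eq4; move: (eq4 0 erefl) (eq4 1 erefl) (eq4 2 erefl) (eq4 3 erefl).
have -> : 2 * y + 2 = 2 * y.+1 by lia.
have -> : 2 * y + 3 = 2 * y.+1 + 1 by lia.
have -> : 2 * z + 1 + 1 = 2 * z.+1 by lia.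
have -> : 2 * z + 1 + 2 = 2 * z.+1 + 1 by lia.
have -> : 2 * z + 1 + 3 = 2 * z.+2 by lia.
rewrite !addn0 !thue_morse_even !thue_morse_odd => e0 e1 e2 e3.
by apply: (@thue_morse_no_cube z); move: e0 e1 e2 e3;
  case: (t y); case: (t y.+1); case: (t z); case: (t z.+1); case: (t z.+2).
Qed.

Lemma thue_morse_odd_period i n d : has_period t i n d -> odd d -> n <= d + 3.
Proof.
move=> per odd_d; rewrite leqNgt; apply/negP => lt_dn.
have shift j : j < 4 -> t (i + j) = t (i + d + j) by move=> lt_j4; rewrite per; [congr t | ]; lia.
have [y [def_i|def_i]] : exists y, i = 2 * y \/ i = 2 * y + 1 by exists i./2; lia.
  have [z def_id] : exists z, i + d = 2 * z + 1 by exists (i + d)./2; lia.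
  by apply: (@thue_morse_parity_shift y z) => j lt_j4; rewrite -def_i -def_id shift.
have [z def_id] : exists z, i + d = 2 * z by exists (i + d)./2; lia.
by apply: (@thue_morse_parity_shift z y) => j lt_j4; rewrite -def_i -def_id shift.
Qed.

Lemma thue_morse_even_period a m e (b r : bool) : 2 * e < 2 * m + r ->
  has_period t (2 * a + b) (2 * m + r) (2 * e) <-> has_period t a (m + (b || r)) e.
Proof.
move=> lt_e; split => per.
  case=> [|j] lt_j.
    have := per 0 lt_e.
    have -> : 2 * a + b + 0 = 2 * (a + 0) + b by lia.
    have -> : 2 * (a + 0) + b + 2 * e = 2 * (a + 0 + e) + b by lia.
    by rewrite !thue_morse_double_add => /addbI.
  have lt_jb : 2 * j.+1 - b + 2 * e < 2 * m + r by case: b r lt_e lt_j {per} => [] [] /=; lia.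
  have := per _ lt_jb.
  have -> : 2 * a + b + (2 * j.+1 - b) = 2 * (a + j.+1) by lia.
  have -> : 2 * (a + j.+1) + 2 * e = 2 * (a + j.+1 + e) by lia.
  by rewrite !thue_morse_even.
move=> k lt_k.
have lt_half : (b + k)./2 + e < m + (b || r) by case: b r lt_e lt_k {per} => [] [] /=; lia.
have -> : 2 * a + b + k = 2 * (a + (b + k)./2) + odd (b + k) by lia.
have -> : 2 * (a + (b + k)./2) + odd (b + k) + 2 * e = 2 * (a + (b + k)./2 + e) + odd (b + k).
  by lia.
by rewrite !thue_morse_double_add per.
Qed.

Definition letter_before (E j : nat) : option bool := if j <= E then Some (t (E - j)) else None.

Definition tail_letters i n : seq (option bool) := mkseq (fun j => letter_before (i + n) j.+1) 3.

(* An odd period d = n - l of t[i, i+n) has l <= 3 by [thue_morse_odd_period], so it is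
   decided by the first and last three letters. *)
Definition odd_short_periodb k (len : nat) (r : bool) (head : seq bool)
    (tail : seq (option bool)) : bool :=
  has (fun l => [&& k < l, l < len, odd l != r &
                    all (fun j => nth None tail (l - 1 - j) == Some (nth false head j)) (iota 0 l)])
      (iota 1 3).

Lemma short_period_split k i n : short_period t k i n <->
  (exists2 e, 0 < e & 2 * e + k < n /\ has_period t i n (2 * e)) \/
  odd_short_periodb k (minn n 4) (odd n) (factor t i 3) (tail_letters i n).
Proof.
split => [[d d_gt0 [lt_dk per]]|[[e e_gt0 [lt_ek per]]|/hasP [l]]].
- have [odd_d|even_d] := boolP (odd d); last first.
    by left; exists d./2; [lia | have -> : 2 * d./2 = d by lia].
  have le_n := thue_morse_odd_period per odd_d.
  have odd_l : odd (n - d) != odd n.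
    by rewrite -[in odd n](@subnK d n) ?oddD ?odd_d ?addbT//; lia.
  right; apply/hasP; exists (n - d); first by rewrite mem_iota; lia.
  apply/and4P; split; rewrite ?odd_l //; try lia.
  apply/allP => j; rewrite mem_iota => /andP [_ lt_j].
  rewrite !nth_mkseq /letter_before ?ifT; try lia.
  by apply/eqP; congr Some; rewrite per; [congr t | ]; lia.
- by exists (2 * e); [lia | split].
rewrite mem_iota => /andP [ge_l1 lt_l4] /and4P [lt_kl lt_ln odd_l /allP tail_eq].
exists (n - l); first by lia.
split; first by lia.
move=> j lt_j; have := tail_eq j; rewrite mem_iota !nth_mkseq /letter_before ?ifT; try lia.
move=> /(_ (ltac:(lia))) /eqP [<-]; congr t; lia.
Qed.

Lemma letter_before_shift E j s : letter_before (E + s) (j + s) = letter_before E j.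
Proof. by rewrite /letter_before leq_add2r subnDr. Qed.

Lemma letter_before_double E q : 0 < q ->
  letter_before (2 * E) q = omap (addb (odd q)) (letter_before E (uphalf q)).
Proof.
move=> q_gt0; rewrite /letter_before; case: ifP => le_q; last by rewrite ifF //; lia.
rewrite ifT /=; last by lia.
have -> : 2 * E - q = 2 * (E - uphalf q) + odd q by lia.
by rewrite thue_morse_double_add.
Qed.

Definition double_head (b : bool) (head : seq bool) : seq bool :=
  mkseq (fun j => odd (b + j) (+) nth false head (b + j)./2) 3.

Lemma factor3_double a (b : bool) : factor t (2 * a + b) 3 = double_head b (factor t a 3).
Proof.
apply: eq_in_mkseq => j lt_j3; rewrite nth_mkseq; last by case: b; lia.
have -> : 2 * a + b + j = 2 * (a + (b + j)./2) + odd (b + j) by lia.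
by rewrite thue_morse_double_add.
Qed.

(* The letter [j.+1] places before the end [2 * (a + m.+1) - (2 - (b + r))] of the doubled
   factor is [q := j + 3 - (b + r)] places before [2 * (a + m.+1)]. *)
Definition double_tail (b r : bool) (tail : seq (option bool)) : seq (option bool) :=
  mkseq (fun j => let q := j + 3 - (b + r) in
                  omap (addb (odd q)) (nth None tail (uphalf q).-1)) 3.

Lemma tail_letters_double a m (b r : bool) :
  tail_letters (2 * a + b) (2 * m + r) = double_tail b r (tail_letters a m.+1).
Proof.
rewrite {1}/tail_letters; apply: eq_in_mkseq => j lt_j3 /=.
rewrite nth_mkseq; last by case: b r => [] []; lia.
rewrite -(letter_before_shift _ _ (2 - (b + r))).
have -> : j.+1 + (2 - (b + r)) = j + 3 - (b + r) by case: b r => [] []; lia.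
have -> : 2 * a + b + (2 * m + r) + (2 - (b + r)) = 2 * (a + m.+1) by case: b r => [] []; lia.
by rewrite letter_before_double ?prednK //; case: b r => [] []; lia.
Qed.

Definition flags i n : seq bool := mkseq (fun k => short_periodb t k i n) 3.

Definition halve_slack (b r : bool) k := (uphalf (k + 1 - r) + (b || r)).-1.

Lemma halve_slackP (b r : bool) k m e : k < 3 ->
  2 * e + k < 2 * m + r <-> e + halve_slack b r k < m + (b || r).
Proof. by rewrite /halve_slack; case: b r => [] [] /=; case: k => [|[|[|k]]] //= _; lia. Qed.

Lemma short_periodb_double a m (b r : bool) k : k < 3 ->
  short_periodb t k (2 * a + b) (2 * m + r) =
  short_periodb t (halve_slack b r k) a (m + (b || r)) ||
  odd_short_periodb k (minn (2 * m + r) 4) r (factor t (2 * a + b) 3)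
                    (tail_letters (2 * a + b) (2 * m + r)).
Proof.
move=> lt_k3; have odd_n : odd (2 * m + r) = r by case: r; lia.
apply/short_periodP/orP => [/short_period_split|per_split]; rewrite ?odd_n.
  case=> [[e e_gt0 [lt_e per]]|odd_per]; last by right.
  left; apply/short_periodP; exists e => //.
  split; first by rewrite -(@halve_slackP b r k m e lt_k3).
  by rewrite -thue_morse_even_period //; lia.
apply/short_period_split; rewrite odd_n.
case: per_split => [/short_periodP [e e_gt0 [lt_e per]]|odd_per]; last by right.
have lt_e2 : 2 * e + k < 2 * m + r by rewrite (@halve_slackP b r k m e lt_k3).
left; exists e => //; split => //.
by apply/thue_morse_even_period => //; lia.
Qed.

Definition double_flags (b r : bool) len head tail (lo hi : seq bool) : seq bool :=
  mkseq (fun k => nth false (if b || r then hi else lo) (halve_slack b r k) ||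
                  odd_short_periodb k len r head tail) 3.

Lemma flags_double a m (b r : bool) :
  flags (2 * a + b) (2 * m + r) =
  double_flags b r (minn (2 * m + r) 4) (factor t (2 * a + b) 3)
               (tail_letters (2 * a + b) (2 * m + r)) (flags a m) (flags a m.+1).
Proof.
apply: eq_in_mkseq => k lt_k3; rewrite short_periodb_double //.
have lt_slack : halve_slack b r k < 3 by rewrite /halve_slack; case: b r => [] []; lia.
by case: (b || r); rewrite nth_mkseq ?addn1 ?addn0.
Qed.

Definition profile i n := (minn n 4, odd n, factor t i 3, tail_letters i n, flags i n).

Local Notation profile_t := (nat * bool * seq bool * seq (option bool) * seq bool)%type.
Local Notation window_t := (profile_t * profile_t * profile_t)%type.

Definition double_profile (b r : bool) (lo hi : profile_t) : profile_t :=
  let: (len, _, head, _, lo_flags) := lo in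
  let: (_, _, _, tail, hi_flags) := hi in
  let len' := minn (2 * len + r) 4 in
  let head' := double_head b head in
  let tail' := double_tail b r tail in
  (len', r, head', tail', double_flags b r len' head' tail' lo_flags hi_flags).

Lemma profile_double a m (b r : bool) :
  profile (2 * a + b) (2 * m + r) = double_profile b r (profile a m) (profile a m.+1).
Proof.
rewrite /profile /= flags_double factor3_double tail_letters_double.
have -> : minn (2 * minn m 4 + r) 4 = minn (2 * m + r) 4 by lia.
by have -> : odd (2 * m + r) = r by case: r; lia.
Qed.

(* The profiles for lengths 2m+r, 2m+r+1, 2m+r+2 only involve those for lengths m, m+1,
   m+2, so windows of three consecutive lengths are closed under doubling. *)
Definition window a m := (profile a m, profile a m.+1, profile a m.+2).

Definition double_window (b r : bool) (w : window_t) : window_t :=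
  let: (p0, p1, p2) := w in
  if r then (double_profile b true p0 p1, double_profile b false p1 p2, double_profile b true p1 p2)
  else (double_profile b false p0 p1, double_profile b true p0 p1, double_profile b false p1 p2).

Lemma window_double a m (b r : bool) :
  window (2 * a + b) (2 * m + r) = double_window b r (window a m).
Proof.
rewrite /window.
have -> : (2 * m + r).+2 = 2 * m.+1 + r by lia.
have -> : (2 * m + r).+1 = 2 * (m + r) + ~~ r by case: r; lia.
by rewrite !profile_double; case: r; rewrite /= ?addn1 ?addn0.
Qed.

(* A DFA for 1(01*0)*10*1: state 1 sits between blocks, 2 inside a block 01*0, 3 inside
   the final 10*1; 4 accepts and 5 is a sink. *)
Definition dfa_step (q : nat) (c : bool) : nat :=
  match q, c with
  | 0, true => 1
  | 1, false => 2
  | 1, true => 3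
  | 2, true => 2
  | 2, false => 1
  | 3, false => 3
  | 3, true => 4
  | _, _ => 5
  end.

Lemma matches_symE b s : matches (RSym b) s <-> s = [:: b].
Proof. by split=> [m | ->]; [inversion m | constructor]. Qed.

Lemma matches_catE r1 r2 s : matches (RCat r1 r2) s <->
  exists s1 s2, [/\ s = s1 ++ s2, matches r1 s1 & matches r2 s2].
Proof.
split=> [m | [s1 [s2 [-> m1 m2]]]]; last by constructor.
by inversion m; subst; exists s1, s2.
Qed.

Lemma matches_starE r s : matches (RStar r) s <->
  s = [::] \/ exists s1 s2, [/\ s = s1 ++ s2, matches r s1 & matches (RStar r) s2].
Proof.
split=> [m | [->|[s1 [s2 [-> m1 m2]]]]]; try by constructor.
by inversion m; subst; [left | right; exists s1, s2].
Qed.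

Lemma matches_star_symE b s : matches (RStar (RSym b)) s <-> s = nseq (size s) b.
Proof.
split; last first.
  elim: s => [|c s IH] /= => [_|[-> /IH m]]; first by constructor.
  by rewrite -cat1s; constructor; first by constructor.
have [n] := ubnP (size s); elim: n s => [//|n IH] s.
move=> lt_s /matches_starE [->//|[s1 [s2 [def_s /matches_symE def_s1 m2]]]].
rewrite def_s def_s1 /= ltnS in lt_s *.
by congr (_ :: _); apply: IH m2.
Qed.


Lemma matches_framedE (b : bool) s :
  matches (RCat (RSym b) (RCat (RStar (RSym (~~ b))) (RSym b))) s <->
  exists k, s = b :: rcons (nseq k (~~ b)) b.
Proof.
split=> [/matches_catE [s1 [s2 [-> /matches_symE -> m2]]] | [k ->]].
  case/matches_catE: m2 => s3 [s4 [-> m3 /matches_symE ->]].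
  by exists (size s3); rewrite cats1 -(matches_star_symE _ _).1.
rewrite -cat1s -cats1; constructor; first by constructor.
by constructor; [apply/matches_star_symE; rewrite size_nseq | constructor].
Qed.

Local Notation re_block := (RCat d0 (RCat (RStar d1) d0)).
Local Notation re_tail := (RCat d1 (RCat (RStar d0) d1)).

Lemma dfa_sink w : foldl dfa_step 5 w = 5.
Proof. by elim: w. Qed.

Lemma dfa_accept w : foldl dfa_step 4 w = 4 <-> w = [::].
Proof. by case: w => [|[] w] //=; rewrite dfa_sink. Qed.

Lemma dfa_tail w : foldl dfa_step 3 w = 4 <-> exists k, w = rcons (nseq k false) true.
Proof.
elim: w => [|[] w IH] /=.
- by split=> // [[k]]; case: k.
- rewrite dfa_accept; split=> [->|[k]]; first by exists 0.
  by case: k => [|k] [].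
- rewrite IH; split=> [[k ->]|[k]]; first by exists k.+1.
  by case: k => [|k] //= [->]; exists k.
Qed.

Lemma dfa_block w : foldl dfa_step 2 w = 4 <->
  exists k w', w = nseq k true ++ false :: w' /\ foldl dfa_step 1 w' = 4.
Proof.
elim: w => [|[] w IH] /=; first by split=> // [[[|k] [w' []]]].
  rewrite IH; split=> [[k [w' [-> acc]]] | [[|k] [w' [//= [->] acc]]]].
    by exists k.+1, w'.
  by exists k, w'.
split=> [acc | [[|k] [w' [//= [->] //]]]].
by exists 0, w.
Qed.

Lemma dfa_between w : foldl dfa_step 1 w = 4 <->
  exists x y, [/\ w = x ++ y, matches (RStar re_block) x & matches re_tail y].
Proof.
have [n] := ubnP (size w); elim: n w => [//|n IH] w lt_w; split.
  case: w lt_w => [//|[] w] /= lt_w.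
    move/dfa_tail => [k ->]; exists [::], (true :: rcons (nseq k false) true).
    by split=> //; [constructor | apply/(matches_framedE true); exists k].
  move/dfa_block => [k [w' [def_w acc]]].
  have lt_w' : size w' < n by move: lt_w; rewrite def_w size_cat /=; lia.
  have [x [y [def_w' mx my]]] := (IH w' lt_w').1 acc.
  exists (false :: rcons (nseq k true) false ++ x), y; split=> //.
    by rewrite def_w def_w' -cats1 /= -!catA.
  by rewrite -cat_cons; constructor => //; apply/(matches_framedE false); exists k.
move=> [x [y [def_w /matches_starE [def_x|[s1 [s2 [def_x blk m2]]]] my]]].
  by rewrite def_w def_x; move: my => /(matches_framedE true) [k ->] /=; apply/dfa_tail; exists k.
case/(matches_framedE false): blk => k def_s1.
rewrite def_w def_x def_s1 -catA /= in lt_w *; apply/dfa_block; exists k, (s2 ++ y); split.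
  by rewrite -cats1 -catA.
apply/IH; last by exists s2, y.
by move: lt_w; rewrite size_cat size_rcons size_nseq /=; lia.
Qed.

Lemma matches_re_thm4E w : matches re_thm4 w <-> foldl dfa_step 0 w = 4.
Proof.
split=> [/matches_catE [_ [w' [-> /matches_symE -> /matches_catE [x [y [-> mx my]]]]]]|].
  by apply/dfa_between; exists x, y.
case: w => [//|[] w] /=; last by rewrite dfa_sink.
move/dfa_between => [x [y [-> mx my]]].
by rewrite -cat1s; constructor; [constructor | constructor].
Qed.

Definition represents (S : seq window_t) n := forall w, w \in S <-> exists a, window a n = w.

(* The bounds 27 here and 20 in [reachable] only need to be large enough: the closedness
   of the resulting lists is checked, not assumed. *)
Definition windows0 : seq window_t := [seq window a 0 | a <- iota 0 27].

Lemma windows0_closed :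
  all (fun w => all (fun b => double_window b false w \in windows0) [:: false; true]) windows0.
Proof. by vm_compute. Qed.

Lemma represents_windows0 : represents windows0 0.
Proof.
move=> w; split=> [/mapP [a _ ->] | [a <-]]; first by exists a.
elim/ltn_ind: a => a IH; have [lt_a27 | ge_a27] := ltnP a 27.
  by apply/mapP; exists a; rewrite ?mem_iota.
have -> : a = 2 * a./2 + odd a by lia.
have -> : 0 = 2 * 0 + false by [].
rewrite window_double; have := allP windows0_closed _ (IH a./2 (ltac:(lia))).
by move/allP/(_ (odd a)); apply; case: (odd a).
Qed.

(* Sorting by [window_code] only makes the representation of a set of windows canonical;
   correctness just uses that the result has the same elements. *)
Definition profile_code (p : profile_t) : seq bool :=
  let: (len, odd_len, head, tail, flg) := p in
  [:: len == 0, len == 1, len == 2, len == 3 & odd_len :: head] ++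
  flatten [seq [:: x == None; x == Some true] | x <- tail] ++ flg.

Definition window_code (w : window_t) : seq bool :=
  let: (p0, p1, p2) := w in profile_code p0 ++ profile_code p1 ++ profile_code p2.

Fixpoint lex_leq (s1 s2 : seq bool) : bool :=
  match s1, s2 with
  | [::], _ => true
  | _, [::] => false
  | a :: s1', b :: s2' => if a == b then lex_leq s1' s2' else b
  end.

Fixpoint squash (T : eqType) (s : seq T) : seq T :=
  match s with
  | x :: (y :: _) as s' => if x == y then squash s' else x :: squash s'
  | _ => s
  end.

Lemma mem_squash (T : eqType) (s : seq T) : squash s =i s.
Proof.
elim: s => [|x [|y s] IH] //= z; case: ifP => [/eqP -> | _]; rewrite ?inE IH ?inE //.
by case: (z == y).
Qed.

Definition canon (S : seq window_t) : seq window_t :=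
  squash (map snd (sort (fun p1 p2 => lex_leq p1.1 p2.1) [seq (window_code w, w) | w <- S])).

Lemma mem_canon S : canon S =i S.
Proof.
move=> w; rewrite mem_squash; apply/mapP/idP => [[[c w'] /=] | w_in].
  by rewrite mem_sort => /mapP [w'' w''_in [_ ->]] ->.
by exists (window_code w, w); rewrite // mem_sort; apply/mapP; exists w.
Qed.

Definition double_windows (r : bool) (S : seq window_t) : seq window_t :=
  canon [seq double_window b r w | w <- S, b <- [:: false; true]].

Lemma represents_double m (r : bool) S :
  represents S m -> represents (double_windows r S) (2 * m + r).
Proof.
move=> rep w; rewrite mem_canon; split.
  case/allpairsP => [[w' b] [/= /rep [a <-] _ ->]].
  by exists (2 * a + b); rewrite window_double.
move=> [a <-]; apply/allpairsP; exists (window a./2 m, odd a); split.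
- by apply/rep; exists a./2.
- by case: (odd a).
- by rewrite {1}(_ : a = 2 * a./2 + odd a) ?window_double //; lia.
Qed.

Local Notation node := (seq window_t * nat)%type.

Definition node_step (r : bool) (v : node) : node := (double_windows r v.1, dfa_step v.2 r).

(* The VM evaluates both arguments of [&&], so the cheap tests guard the expensive one. *)
Definition same_node (u v : node) : bool :=
  if (u.2 == v.2) && (size u.1 == size v.1) then u.1 == v.1 else false.

Lemma same_nodeP u v : same_node u v -> u = v.
Proof.
by case: u v => [S q] [S' q']; rewrite /same_node /=; case: ifP => // /andP [/eqP -> _] /eqP ->.
Qed.

Definition bfs_step (p : seq node * seq node) : seq node * seq node :=
  let: (todo, seen) := p in
  let fresh := foldl (fun acc v => if has (same_node v) (seen ++ acc) then acc else rcons acc v)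
                 [::] [seq node_step r v | v <- todo, r <- [:: false; true]] in
  (fresh, seen ++ fresh).

Definition root : node := node_step true (windows0, 0).

Definition reachable : seq node := Eval vm_compute in (iter 20 bfs_step ([:: root], [:: root])).2.

Definition unbordered_flag (w : window_t) : bool := ~~ nth false w.1.1.2 0.

Lemma reachable_certificate :
  [&& has (same_node root) reachable,
      all (fun v => has (same_node (node_step false v)) reachable) reachable,
      all (fun v => has (same_node (node_step true v)) reachable) reachable
    & all (fun v => has unbordered_flag v.1 == (v.2 != 4)) reachable].
Proof. by vm_compute. Qed.

Lemma root_reachable : has (same_node root) reachable.
Proof. by case/and4P: reachable_certificate => root_in _ _ _; exact: root_in. Qed.

Lemma reachable_closed v (r : bool) :
  v \in reachable -> has (same_node (node_step r v)) reachable.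
Proof.
move=> v_in; case/and4P: reachable_certificate => _ /allP step0 /allP step1 _.
by case: r; [exact: step1 | exact: step0].
Qed.

Lemma reachable_accepting v :
  v \in reachable -> has unbordered_flag v.1 = (v.2 != 4).
Proof.
move=> v_in; case/and4P: reachable_certificate => _ _ _ /allP /(_ v v_in) /eqP accept_v.
exact: accept_v.
Qed.

Definition describes n (v : node) := represents v.1 n /\ v.2 = foldl dfa_step 0 (binary n).

Lemma describes_step m (r : bool) v :
  0 < 2 * m + r -> describes m v -> describes (2 * m + r) (node_step r v).
Proof.
move=> n_gt0 [rep dfa]; split; first exact: represents_double.
rewrite binary_half // foldl_rcons /= dfa.
have -> : (2 * m + r)./2 = m by case: r {n_gt0}; lia.
by have -> : odd (2 * m + r) = r by case: r {n_gt0}; lia.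
Qed.

Lemma reachable_describes n : 0 < n -> exists2 v, v \in reachable & describes n v.
Proof.
elim/ltn_ind: n => n IH n_gt0.
have def_n : n = 2 * n./2 + odd n by lia.
have [v v_in desc_v] : exists2 v, has (same_node (node_step (odd n) v)) reachable
                                 & describes n./2 v.
  have [m0 | m_gt0] := posnP n./2.
    have -> : odd n = true by lia.
    exists (windows0, 0); first exact: root_reachable.
    by rewrite m0; split; [exact: represents_windows0 | ].
  have [v v_in desc_v] := IH n./2 (ltac:(lia)) m_gt0.
  by exists v; [exact: reachable_closed | ].
case/hasP: v_in => u u_in /same_nodeP eq_u; exists u; first exact: u_in.
by rewrite -eq_u {1}def_n; apply: describes_step desc_v; rewrite -def_n.
Qed.

Lemma unbordered_factorE a n : unbordered (factor t a n) <-> ~~ short_periodb t 0 a n.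
Proof.
rewrite /unbordered bordered_factor_period.
split=> [nb | /negP nsp [d /andP [d_gt0 lt_dn] per]].
  apply/negP => /short_periodP [d d_gt0 [lt_dn per]]; apply: nb; exists d => //.
  by rewrite addn0 in lt_dn; rewrite d_gt0 lt_dn.
by apply: nsp; apply/short_periodP; exists d; rewrite ?addn0.
Qed.

Lemma unbordered_flag_window a n : unbordered_flag (window a n) = ~~ short_periodb t 0 a n.
Proof. by []. Qed.

Theorem theorem4 (n : nat) :
  (exists i : nat, unbordered (factor thue_morse i n)) <->
  ~ matches re_thm4 (binary n).
Proof.
rewrite matches_re_thm4E; have [-> | n_gt0] := posnP n.
  by split=> // _; exists 0 => [[u [/andP [u_gt0]]]]; rewrite leqNgt u_gt0.
have [v v_in [rep dfa_v]] := reachable_describes n_gt0.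
have accept_v := reachable_accepting v_in; rewrite -dfa_v; split=> [[a nb] | /eqP].
  have : has unbordered_flag v.1.
    apply/hasP; exists (window a n); first by apply/rep; exists a.
    by rewrite unbordered_flag_window -unbordered_factorE.
  by rewrite accept_v => /eqP.
rewrite -accept_v => /hasP [w /rep [a <-]]; rewrite unbordered_flag_window => nsp.
by exists a; apply/unbordered_factorE.
Qed.
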